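(* Let $\tau\in\mathbb{Z}$ and let $m=2^\alpha a$, $l=2^\beta b$ with $a,b$ odd positive integers, $\alpha\ge1$, $\beta\ge0$. Then $$2^{2\alpha}\ \Big|\ (-1)^{m\tau+m+l}\binom{m}{l}\binom{m\tau+l-1}{m-1}-(-1)^{\frac{m\tau+m+l}{2}}\binom{m/2}{l/2}\binom{\frac{m\tau+l}{2}-1}{\frac{m}{2}-1},$$ where, when $\beta=0$, the second term is set to zero.
   Context: For integers $b\geq 0$ and $a\in\mathbb{Z}$ the binomial coefficient is defined by: $\binom{a}{b}=1$ if $b=0$; $\binom{a}{b}$ is the usual binomial coefficient if $b\geq 1$ and $a\geq 0$; and $\binom{a}{b}=(-1)^b\binom{-a+b-1}{b}$ if $b\geq1$ and $a<0$. *)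

From mathcomp Require Import all_boot all_order all_algebra.
Set Implicit Arguments. Unset Strict Implicit. Unset Printing Implicit Defensive.
Import Order.TTheory GRing.Theory Num.Theory.
Local Open Scope ring_scope.

Definition binZ (a : int) (b : nat) : int :=
  if b == 0%N then 1
  else if 0 <= a then ('C(`|a|%N, b))%:Z
  else (-1) ^+ b * ('C(`|a|%N + b - 1, b))%:Z.

Definition signz (k : int) : int := (-1) ^+ (odd `|k|%N).

From mathcomp Require Import all_boot all_order all_algebra intdiv zify ring.
Import Order.TTheory GRing.Theory Num.Theory.
Local Open Scope ring_scope.

(* Let N := m tau + l.  If beta = 0, then l and N are odd and the absorption
   identities l C(m, l) = m C(m-1, l-1) and N C(N-1, m-1) = m C(N, m) show that 2^alpha
   divides both binomial coefficients of the first term.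
   If beta >= 1, write m = 2m', l = 2l' and N' = m' tau + l'.  Splitting (2k)! = 2^k k! (2k-1)!! gives
     C(2m', 2l') (2l'-1)!! (2m'-2l'-1)!! = C(m', l') (2m'-1)!!,
     C(2N'-1, 2m'-1) (2m'-1)!! = C(N'-1, m'-1) (2N'-1)(2N'-3)...(2N'-2m'+1),
   so up to odd factors it remains to compare the product of the m' odd numbers
   2N'-1, ..., 2N'-2m'+1 with +-(2l'-1)!! (2m'-2l'-1)!!.  For even z the product
   P(z) = (z+1)(z+3)...(z+2m'-1) satisfies P(z + m) = (-1)^m' P(z) modulo every power of 2
   dividing m^2: moving z by 2 multiplies the difference by odd numbers up to a multiple of
   m^2, and it vanishes at z = -m.  Shifting z = -2(m'-l') by m tau concludes. *)

Lemma int_step_const (P : int -> bool) :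
  (forall k, P (k + 1) = P k) -> forall k, P k = P 0.
Proof.
move=> P_step; elim/int_ind => [//|n IHn|n IHn]; rewrite -IHn.
  by rewrite -(P_step n); congr P; lia.
by rewrite -(P_step (- n.+1%:Z)); congr P; lia.
Qed.

Lemma dvdz_sign_mull (d x : int) n : (d %| (-1) ^+ n * x)%Z = (d %| x)%Z.
Proof. by rewrite !dvdzE abszM abszX exp1n mul1n. Qed.

Lemma signzD x y : signz (x + y) = signz x * signz y.
Proof. by rewrite /signz -signr_addb; congr (_ ^+ _); lia. Qed.

Lemma signz_nat (n : nat) : signz n = (-1) ^+ n.
Proof. by rewrite /signz signr_odd. Qed.

Lemma signz_mul2 x : signz (2 * x) = 1.
Proof. by rewrite /signz abszM /= oddM. Qed.

Lemma coprimez_2X_odd e (x : int) : odd `|x| -> coprimez (2 ^+ e) x.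
Proof. by move=> x_odd; apply: coprimezXl; rewrite coprimezE coprime2n. Qed.

Definition oddrise (n : nat) (z : int) : int := \prod_(i < n) (z + (2 * i + 1)%N%:Z).

(* [odfact n] is the double factorial (2n-1)!!. *)
Definition odfact (n : nat) : int := oddrise n 0.

Lemma oddrise_add2 n z :
  oddrise n (z + 2) * (z + 1) = oddrise n z * (z + (2 * n)%N%:Z + 1).
Proof.
case: n => [|n]; first by rewrite /oddrise !big_ord0; ring.
rewrite /oddrise [in LHS]big_ord_recr [in RHS]big_ord_recl /=.
have -> : \prod_(i < n) (z + 2 + (2 * i + 1)%N%:Z) =
          \prod_(i < n) (z + (2 * bump 0 i + 1)%N%:Z).
  by apply: eq_bigr => i _; rewrite /bump /=; lia.
have -> : z + 2 + (2 * n + 1)%N%:Z = z + (2 * n.+1)%N%:Z + 1 by lia.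
have -> : z + (2 * 0 + 1)%N%:Z = z + 1 by lia.
ring.
Qed.

Lemma prod_subr_odd n w :
  \prod_(j < n) (w - (2 * j + 1)%N%:Z) = oddrise n (w - (2 * n)%N%:Z).
Proof.
rewrite /oddrise (reindex_inj rev_ord_inj) /=.
by apply: eq_bigr => i _; have := ltn_ord i; lia.
Qed.

Lemma oddrise_opp_add p q :
  oddrise (p + q) (- (2 * p)%N%:Z) = (-1) ^+ p * odfact p * odfact q.
Proof.
rewrite {1}/oddrise big_split_ord -/(oddrise p _) -[- _]add0r -prod_subr_odd.
congr (_ * _).
  rewrite (eq_bigr (fun j : 'I_p => - (0 + (2 * j + 1)%N%:Z))) => [|i _]; last by lia.
  by rewrite prodrN card_ord.
by apply: eq_bigr => i _ /=; lia.
Qed.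

Lemma odfactS n : odfact n.+1 = odfact n * (2 * n + 1)%N%:Z.
Proof. by rewrite /odfact /oddrise big_ord_recr add0r. Qed.

Lemma coprimez_2X_odfact e n : coprimez (2 ^+ e) (odfact n).
Proof.
elim: n => [|n IHn]; first by rewrite /odfact /oddrise big_ord0 coprimezE coprimen1.
by rewrite odfactS coprimezMr IHn coprimez_2X_odd //=; lia.
Qed.

Section OddriseCongruence.

Variables (e n : nat).
Hypothesis dvd_2n_sq : ((2 : int) ^+ e %| (2 * n)%N%:Z ^+ 2)%Z.

Lemma oddrise_add2n k :
  ((2 : int) ^+ e %| oddrise n (2 * k + (2 * n)%N%:Z) - (-1) ^+ n * oddrise n (2 * k))%Z.
Proof.
set s : int := (-1) ^+ n; set m : int := (2 * n)%N%:Z.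
pose P x := ((2 : int) ^+ e %| oddrise n (2 * x + m) - s * oddrise n (2 * x))%Z.
have P_step x : P (x + 1) = P x.
  rewrite /P; set z := 2 * x.
  have -> : 2 * (x + 1) = z + 2 by rewrite /z; lia.
  have -> : z + 2 + m = (z + m) + 2 by ring.
  have step_z := oddrise_add2 n z; have step_zm := oddrise_add2 n (z + m).
  rewrite -/m in step_z step_zm.
  have unit_l : coprimez (2 ^+ e) ((z + 1) * (z + m + 1)).
    by rewrite coprimezMr !coprimez_2X_odd //; rewrite /z /m; lia.
  have unit_r : coprimez (2 ^+ e) ((z + m + m + 1) * (z + 1)).
    by rewrite coprimezMr !coprimez_2X_odd //; rewrite /z /m; lia.
  rewrite -(Gauss_dvdzl _ unit_l) -[in RHS](Gauss_dvdzl _ unit_r).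
  set A := oddrise n z in step_z *; set B := oddrise n (z + 2) in step_z *.
  set C := oddrise n (z + m) in step_zm *; set E := oddrise n (z + m + 2) in step_zm *.
  have -> : (E - s * B) * ((z + 1) * (z + m + 1)) =
      (C - s * A) * ((z + m + m + 1) * (z + 1)) - s * A * m ^+ 2
      + ((z + 1) * (E * (z + m + 1) - C * (z + m + m + 1))
         - s * (z + m + 1) * (B * (z + 1) - A * (z + m + 1))) by ring.
  rewrite step_z step_zm !subrr !mulr0 subr0.
  by rewrite rpredBr // dvdz_mull.
rewrite -/(P k) (int_step_const _ P_step k) -(int_step_const _ P_step (- n%:Z)) /P.
have -> : 2 * - n%:Z = - m by rewrite /m; lia.
rewrite addNr -/(odfact n).
have := oddrise_opp_add n 0; rewrite addn0 [odfact 0]/odfact /oddrise big_ord0 mulr1 => ->.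
by rewrite mulrA -exprD -signr_odd addnn odd_double mul1r subrr dvdz0.
Qed.

Lemma oddrise_addMn k t :
  ((2 : int) ^+ e %| oddrise n (2 * k + (2 * n)%N%:Z * t)
                     - signz (n%:Z * t) * oddrise n (2 * k))%Z.
Proof.
pose Q x := ((2 : int) ^+ e %| oddrise n (2 * k + (2 * n)%N%:Z * x)
                              - signz (n%:Z * x) * oddrise n (2 * k))%Z.
have Q_step x : Q (x + 1) = Q x.
  rewrite /Q; set k' := k + n%:Z * x.
  have -> : oddrise n (2 * k + (2 * n)%N%:Z * (x + 1))
              - signz (n%:Z * (x + 1)) * oddrise n (2 * k)
      = (oddrise n (2 * k' + (2 * n)%N%:Z) - (-1) ^+ n * oddrise n (2 * k'))
        + (-1) ^+ n * (oddrise n (2 * k + (2 * n)%N%:Z * x)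
                       - signz (n%:Z * x) * oddrise n (2 * k)).
    rewrite [n%:Z * _]mulrDr mulr1 signzD signz_nat.
    have -> : 2 * k' = 2 * k + (2 * n)%N%:Z * x by rewrite /k'; lia.
    have -> : 2 * k + (2 * n)%N%:Z * (x + 1) = 2 * k + (2 * n)%N%:Z * x + (2 * n)%N%:Z by lia.
    ring.
  by rewrite rpredDl ?oddrise_add2n // dvdz_sign_mull.
rewrite -/(Q t) (int_step_const _ Q_step) /Q.
by rewrite !mulr0 addr0 signz_nat mul1r subrr dvdz0.
Qed.

End OddriseCongruence.

Definition ffactz (a : int) (b : nat) : int := \prod_(i < b) (a - i%:Z).

Lemma ffactzS a b : ffactz a b.+1 = ffactz a b * (a - b%:Z).
Proof. by rewrite /ffactz big_ord_recr. Qed.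

Lemma ffactzSl a b : ffactz a b.+1 = a * ffactz (a - 1) b.
Proof.
rewrite /ffactz big_ord_recl subr0; congr (_ * _).
by apply: eq_bigr => i _; rewrite lift0; lia.
Qed.

Lemma ffactz_nat (n b : nat) : ffactz n b = (n ^_ b)%N%:Z.
Proof.
elim: b => [|b IHb]; first by rewrite /ffactz big_ord0 ffactn0.
rewrite ffactzS IHb ffactnSr.
have [le_bn | lt_nb] := leqP b n; first by rewrite PoszM; congr (_ * _); lia.
by rewrite ffact_small // mul0r mul0n.
Qed.

Lemma ffactz_Negz (n b : nat) : ffactz (Negz n) b = (-1) ^+ b * ((n + b) ^_ b)%N%:Z.
Proof.
elim: b => [|b IHb]; first by rewrite /ffactz big_ord0 ffactn0 expr0 mulr1.
rewrite ffactzS IHb addnS ffactSS PoszM exprS NegzE.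
have -> : (n + b).+1%:Z = n%:Z + 1 + b%:Z by lia.
ring.
Qed.

Lemma binZ_ffactz a b : binZ a b * b`!%:Z = ffactz a b.
Proof.
rewrite /binZ; case: b => [|b]; first by rewrite /ffactz big_ord0 fact0 mulr1.
case: a => n /=; first by rewrite -PoszM bin_ffact ffactz_nat.
rewrite ffactz_Negz -mulrA -PoszM.
have -> : (n.+1 + b.+1 - 1 = n + b.+1)%N by lia.
by rewrite bin_ffact.
Qed.

Lemma factz_neq0 n : n`!%:Z != 0.
Proof. by rewrite eqz_nat -lt0n fact_gt0. Qed.

Lemma binZ_mul_diag N k : N * binZ (N - 1) k = k.+1%:Z * binZ N k.+1.
Proof.
apply: (@mulIf _ k`!%:Z); first exact: factz_neq0.
by rewrite -mulrA binZ_ffactz -ffactzSl -binZ_ffactz factS PoszM; ring.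
Qed.

Lemma dvdz_bin_coprime (d : int) m b : (0 < b)%N ->
  (d %| m%:Z)%Z -> coprimez d b%:Z -> (d %| 'C(m, b)%:Z)%Z.
Proof.
case: b => // b _ dvd_m coprime_b.
rewrite -(Gauss_dvdzl _ coprime_b) -PoszM mulnC -mul_bin_diag PoszM.
exact: dvdz_mulr.
Qed.

Lemma dvdz_binZ_coprime (d N : int) m : (0 < m)%N ->
  (d %| m%:Z)%Z -> coprimez d N -> (d %| binZ (N - 1) m.-1)%Z.
Proof.
move=> m_gt0 dvd_m coprime_N.
by rewrite -(Gauss_dvdzl _ coprime_N) mulrC binZ_mul_diag prednK // dvdz_mulr.
Qed.

Lemma fact_double k : (2 * k)`!%:Z = 2 ^+ k * k`!%:Z * odfact k.
Proof.
elim: k => [|k IHk]; first by rewrite /odfact /oddrise big_ord0 fact0 expr0 !mulr1.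
rewrite (_ : 2 * k.+1 = (2 * k).+2)%N; last by lia.
rewrite !factS !PoszM IHk odfactS exprS.
have -> : (2 * k).+2%:Z = 2 * (k.+1)%:Z by lia.
have -> : (2 * k).+1%:Z = (2 * k + 1)%N%:Z by lia.
ring.
Qed.

Lemma fact_double_add1 k : (2 * k + 1)`!%:Z = 2 ^+ k * k`!%:Z * odfact k.+1.
Proof. by rewrite addn1 factS PoszM fact_double odfactS addn1; ring. Qed.

Lemma bin_double m l : (l <= m)%N ->
  'C(2 * m, 2 * l)%:Z * odfact l * odfact (m - l) = 'C(m, l)%:Z * odfact m.
Proof.
move=> le_lm.
have le_2l_2m : (2 * l <= 2 * m)%N by rewrite leq_mul2l le_lm orbT.
have := congr1 Posz (bin_fact le_2l_2m).
rewrite -mulnBr !PoszM !fact_double => fact_2m.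
have := congr1 Posz (bin_fact le_lm); rewrite !PoszM => fact_m.
apply: (@mulIf _ (2 ^+ m * l`!%:Z * (m - l)`!%:Z)).
  by rewrite !mulf_neq0 ?expf_neq0 ?factz_neq0.
have split_2m : (2 : int) ^+ m = 2 ^+ l * 2 ^+ (m - l) by rewrite -exprD subnKC.
transitivity ('C(2 * m, 2 * l)%:Z *
  (2 ^+ l * l`!%:Z * odfact l * (2 ^+ (m - l) * (m - l)`!%:Z * odfact (m - l)))).
  by rewrite split_2m; ring.
by rewrite fact_2m -fact_m; ring.
Qed.

Lemma ffactz_double_odd w n : ffactz (2 * w - 1) (2 * n + 1) =
  \prod_(j < n.+1) (2 * w - (2 * j + 1)%N%:Z) * 2 ^+ n * ffactz (w - 1) n.
Proof.
elim: n => [|n IHn]; first by rewrite /ffactz !big_ord_recr !big_ord0 /=; ring.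
rewrite (_ : 2 * n.+1 + 1 = (2 * n + 1).+2)%N; last by lia.
rewrite ffactzS ffactzS IHn [in RHS]big_ord_recr /= exprS ffactzS.
have -> : (2 * n + 1).+1%:Z = 2 * n%:Z + 2 by lia.
have -> : (2 * n + 1)%N%:Z = 2 * n%:Z + 1 by lia.
have -> : (2 * n.+1 + 1)%N%:Z = 2 * n%:Z + 3 by lia.
ring.
Qed.

Lemma binZ_double_odd w n : binZ (2 * w - 1) (2 * n + 1) * odfact n.+1 =
  binZ (w - 1) n * \prod_(j < n.+1) (2 * w - (2 * j + 1)%N%:Z).
Proof.
have := binZ_ffactz (2 * w - 1) (2 * n + 1).
rewrite ffactz_double_odd fact_double_add1 -(binZ_ffactz (w - 1) n) => ffact_eq.
apply: (@mulIf _ (2 ^+ n * n`!%:Z)); first by rewrite mulf_neq0 ?expf_neq0 ?factz_neq0.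
transitivity (binZ (2 * w - 1) (2 * n + 1) * (2 ^+ n * n`!%:Z * odfact n.+1)); first by ring.
by rewrite ffact_eq; ring.
Qed.

Lemma prod_subr_odd_congr e m l tau : (l <= m)%N ->
  ((2 : int) ^+ e %| (2 * m)%N%:Z ^+ 2)%Z ->
  ((2 : int) ^+ e %| \prod_(j < m) (2 * (m%:Z * tau + l%:Z) - (2 * j + 1)%N%:Z)
     - signz (m%:Z * tau) * ((-1) ^+ (m - l) * odfact (m - l) * odfact l))%Z.
Proof.
move=> le_lm dvd_2m_sq.
have := oddrise_opp_add (m - l) l; rewrite subnK // => oddrise_opp_eq.
rewrite prod_subr_odd -oddrise_opp_eq.
have -> : 2 * (m%:Z * tau + l%:Z) - (2 * m)%N%:Z = 2 * - (m - l)%N%:Z + (2 * m)%N%:Z * tau by lia.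
have -> : - (2 * (m - l))%N%:Z = 2 * - (m - l)%N%:Z by lia.
exact: oddrise_addMn.
Qed.

Lemma binZ_double_congr e m l tau : (0 < m)%N ->
  ((2 : int) ^+ e %| (2 * m)%N%:Z ^+ 2)%Z ->
  let N := m%:Z * tau + l%:Z in
  ((2 : int) ^+ e %| 'C(2 * m, 2 * l)%:Z * binZ (2 * N - 1) (2 * m - 1)
                     - signz (N + m%:Z) * 'C(m, l)%:Z * binZ (N - 1) (m - 1))%Z.
Proof.
case: m => // m _ dvd_sq; cbv zeta; set N := m.+1%:Z * tau + l%:Z.
have [le_lm | lt_ml] := leqP l m.+1; last first.
  by rewrite !bin_small ?ltn_pmul2l // mulr0 !mul0r subrr dvdz0.
have sign_eq : signz (N + m.+1%:Z) = signz (m.+1%:Z * tau) * (-1) ^+ (m.+1 - l).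
  rewrite /N -addrA signzD -PoszD signz_nat -signr_odd -[in RHS]signr_odd.
  by congr (_ * _ ^+ _); lia.
rewrite sign_eq (_ : 2 * m.+1 - 1 = 2 * m + 1)%N ?subn1 /=; last by lia.
set C2 := 'C(2 * m.+1, 2 * l)%:Z; set C1 := 'C(m.+1, l)%:Z.
set B2 := binZ (2 * N - 1) (2 * m + 1); set B1 := binZ (N - 1) m.
set P := \prod_(j < m.+1) (2 * N - (2 * j + 1)%N%:Z).
set Q := signz (m.+1%:Z * tau) * ((-1) ^+ (m.+1 - l) * odfact (m.+1 - l) * odfact l).
have coprime_odd : coprimez (2 ^+ e) (odfact l * odfact (m.+1 - l) * odfact m.+1).
  by rewrite !coprimezMr !coprimez_2X_odfact.
rewrite -(Gauss_dvdzl _ coprime_odd).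
have -> : (C2 * B2 - signz (m.+1%:Z * tau) * (-1) ^+ (m.+1 - l) * C1 * B1)
            * (odfact l * odfact (m.+1 - l) * odfact m.+1)
          = C2 * odfact l * odfact (m.+1 - l) * (B2 * odfact m.+1) - odfact m.+1 * C1 * B1 * Q.
  by rewrite /Q; ring.
rewrite bin_double // binZ_double_odd -/P.
have -> : C1 * odfact m.+1 * (B1 * P) - odfact m.+1 * C1 * B1 * Q
          = odfact m.+1 * C1 * B1 * (P - Q) by ring.
exact/dvdz_mull/prod_subr_odd_congr.
Qed.

Theorem lemma3p3 (tau : int) (alpha beta a b : nat)
  (ha : odd a) (hb : odd b) (halpha : (1 <= alpha)%N) :
  let m : nat := (2 ^ alpha * a)%N in
  let l : nat := (2 ^ beta * b)%N in
  let t1 : int :=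
    signz (m%:Z * tau + m%:Z + l%:Z) * ('C(m, l))%:Z
      * binZ (m%:Z * tau + l%:Z - 1) (m - 1)%N in
  let t2 : int :=
    if beta == 0%N then 0
    else signz (divz (m%:Z * tau + m%:Z + l%:Z) 2) * ('C(m %/ 2, l %/ 2)%N)%:Z
      * binZ (divz (m%:Z * tau + l%:Z) 2 - 1) (m %/ 2 - 1)%N in
  (((2 ^ (2 * alpha))%N)%:Z %| t1 - t2)%Z.
Proof.
cbv zeta.
have [m' m_eq] : exists m', (2 ^ alpha * a = 2 * m')%N.
  by exists (2 ^ alpha.-1 * a)%N; rewrite mulnA -expnS prednK.
have [a_gt0 b_gt0] : (0 < a)%N /\ (0 < b)%N by split; lia.
have m'_gt0 : (0 < m')%N by move: m_eq; rewrite -(prednK halpha) expnS; lia.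
have dvd_m : ((2 : int) ^+ alpha %| (2 ^ alpha * a)%N%:Z)%Z.
  by rewrite PoszM -natz natrX dvdz_mulr.
have -> : (2 ^ (2 * alpha))%N%:Z = 2 ^+ (2 * alpha) by rewrite -natz natrX.
case: beta => [|beta] /=.
  rewrite expn0 mul1n subr0 mul2n -addnn exprD -mulrA subn1.
  apply/dvdz_mull/dvdz_mul; first by rewrite dvdz_bin_coprime ?coprimez_2X_odd.
  by rewrite dvdz_binZ_coprime ?coprimez_2X_odd ?muln_gt0 ?expn_gt0 //; rewrite m_eq; lia.
rewrite (_ : 2 ^ beta.+1 * b = 2 * (2 ^ beta * b))%N; last by rewrite expnS mulnA.
set l' := (2 ^ beta * b)%N; rewrite m_eq !mulKn //.
rewrite (_ : (2 * m')%N%:Z * tau + (2 * m')%N%:Z + (2 * l')%N%:Z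
           = 2 * (m'%:Z * tau + l'%:Z + m'%:Z));
  last by rewrite !PoszM; ring.
rewrite (_ : (2 * m')%N%:Z * tau + (2 * l')%N%:Z = 2 * (m'%:Z * tau + l'%:Z));
  last by rewrite !PoszM; ring.
rewrite !mulKz // signz_mul2 mul1r.
apply: binZ_double_congr => //.
by rewrite -m_eq PoszM -natz natrX exprMn -exprM mulnC dvdz_mulr.
Qed.
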